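(* Let $f:\mathbb{R}^d\to\mathbb{R}^d$ be smooth with all derivatives uniformly bounded, let $n\ge 3$, and for each step size $h>0$ (in some range $0<h\le h_0$) let $q:[0,h]\to\mathbb{R}^d$ be a smooth solution of $\ddot q(t)=f(q(t))$ and let $q_d$ be a prolongation-collocation Hermite polynomial of degree $2n-1$ for $q$ on $[0,h]$ (as defined in the context), with $\dot q$ and $\dot q_d(\tau)$, $\tau\in\{0,h\}$, bounded uniformly in $h$. Suppose that for some $p>0$ and for $\tau\in\{0,h\}$ one has $\dot q_d(\tau)=\dot q(\tau)+\mathcal{O}(h^p)$ as $h\to 0$. Then for $\tau\in\{0,h\}$, $$q_d^{(j)}(\tau)=q^{(j)}(\tau)+\mathcal{O}(h^p),\qquad j=3,\dots,n.$$
   Context: Setting: configuration space $Q=\mathbb{R}^d$, separable Lagrangian $L(q,\dot q)=\tfrac12 m|\dot q|^2-V(q)$, whose Euler--Lagrange equation is the second-order ODE $\ddot q=f(q)$ with $f=-\nabla V/m$. Given a solution $q$ of this ODE on $[0,h]$, a prolongation-collocation Hermite polynomial of degree $2n-1$ for $q$ on $[0,h]$ is a polynomial $q_d:[0,h]\to\mathbb{R}^d$ of degree at most $2n-1$ satisfying the boundary conditions $q_d(0)=q(0)$, $q_d(h)=q(h)$ and the collocation conditions, for $\tau\in\{0,h\}$ and $j=2,\dots,n$, $$q_d^{(j)}(\tau)=\frac{d^{j-2}}{dt^{j-2}}f(q_d(t))\Big|_{t=\tau},$$ i.e. $q_d$ satisfies the equation $\ddot q=f(q)$ and its first $n-2$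 time-derivatives (prolongations) $q^{(3)}=f'(q)\dot q$, etc., at the endpoints $t=0$ and $t=h$. Such a polynomial is written in two-point Hermite form $q_d(t)=\sum_{j=0}^{n-1}\big(q_d^{(j)}(0)H_{n,j}(t)+(-1)^j q_d^{(j)}(h)H_{n,j}(h-t)\big)$ with $H_{n,j}(t)=\frac{t^j}{j!}(1-t/h)^n\sum_{s=0}^{n-j-1}\binom{n+s-1}{s}(t/h)^s$. The $\mathcal{O}(\cdot)$ symbols are as $h\to0$ with constants independent of $h$. *)

From Stdlib Require Fin.
From Stdlib Require Import Reals List.
Open Scope R_scope.

Definition Vec (d : nat) : Type := Fin.t d -> R.

Definition shift {d : nat} (x : Vec d) (i : Fin.t d) (s : R) : Vec d :=
  fun k => x k + (if Fin.eq_dec k i then s else 0).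

(* Df l is the iterated partial
   derivative in the directions listed in l: Df (i :: l) = d/dx_i (Df l).
   (Existence of all bounded partials of all orders is equivalent to f being
   C^infinity with all Frechet derivatives bounded.) *)
Definition smooth_bounded_derivs {d : nat} (f : Vec d -> Vec d) : Prop :=
  exists Df : list (Fin.t d) -> Vec d -> Vec d,
    (forall x k, Df nil x k = f x k) /\
    (forall l i x k,
        derivable_pt_lim (fun s => Df l (shift x i s) k) 0 (Df (i :: l) x k)) /\
    (forall l, exists C, forall x k, Rabs (Df l x k) <= C).

Definition deriv_tower {d : nat} (g : R -> Vec d) (D : nat -> R -> Vec d) : Prop :=
  (forall t i, D 0%nat t i = g t i) /\
  (forall k t i, derivable_pt_lim (fun s => D k s i) t (D (S k) t i)).

Definition poly_curve_deg_le {d : nat} (m : nat) (g : R -> Vec d) : Prop :=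
  exists c : nat -> Vec d, forall t i, g t i = sum_f_R0 (fun k => c k i * t ^ k) m.

Definition pc_hermite {d : nat} (f : Vec d -> Vec d) (n : nat) (h : R)
    (q qd : R -> Vec d) (Dqd : nat -> R -> Vec d) : Prop :=
  poly_curve_deg_le (2 * n - 1) qd /\
  (forall i, qd 0 i = q 0 i) /\ (forall i, qd h i = q h i) /\
  exists F : nat -> R -> Vec d,
    deriv_tower (fun t => f (qd t)) F /\
    forall j tau i, (2 <= j <= n)%nat -> (tau = 0 \/ tau = h) ->
      Dqd j tau i = F (j - 2)%nat tau i.

From Stdlib Require Import Reals List Lra Lia FunctionalExtensionality FinFun.
Open Scope R_scope.

(* Differentiating q'' = f(q) repeatedly writes q^(k+2) as a fixed polynomial in
   q', ..., q^(k) whose coefficients are partial derivatives of f at q; since f is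
   only given through bounded partial derivatives, the chain rule behind this is
   obtained from a second-order remainder bound.  The collocation conditions say
   that q_d^(k+2) is the same polynomial in the derivatives of q_d at the end points,
   where q_d = q.  The coefficients being bounded, and the lower derivatives being
   bounded by induction, an O(h^p) error in the first derivative propagates to an
   O(h^p) error in every higher derivative, order by order. *)

Definition lsum {A : Type} (L : list A) (f : A -> R) : R :=
  fold_right (fun a acc => f a + acc) 0 L.

Lemma lsum_ext {A} (L : list A) f g :
  (forall a, In a L -> f a = g a) -> lsum L f = lsum L g.
Proof. induction L; simpl; intros H; auto. rewrite H, IHL; auto. Qed.

Lemma lsum_app {A} (L1 L2 : list A) f : lsum (L1 ++ L2) f = lsum L1 f + lsum L2 f.
Proof. induction L1; simpl; [ring|]. rewrite IHL1; ring. Qed.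

Lemma lsum_map {A B} (L : list A) (g : A -> B) f :
  lsum (map g L) f = lsum L (fun x => f (g x)).
Proof. induction L; simpl; auto. rewrite IHL; auto. Qed.

Lemma lsum_flat_map {A B} (L : list A) (g : A -> list B) f :
  lsum (flat_map g L) f = lsum L (fun x => lsum (g x) f).
Proof. induction L; simpl; auto. rewrite lsum_app, IHL; auto. Qed.

Lemma lsum_mult_l {A} (L : list A) c f : lsum L (fun x => c * f x) = c * lsum L f.
Proof. induction L; simpl; [ring|]. rewrite IHL; ring. Qed.

Lemma lsum_0 {A} (L : list A) f : (forall a, In a L -> f a = 0) -> lsum L f = 0.
Proof. induction L; simpl; intros H; auto. rewrite H, IHL; auto; ring. Qed.

Lemma lsum_le {A} (L : list A) f g :
  (forall a, In a L -> f a <= g a) -> lsum L f <= lsum L g.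
Proof.
  induction L; simpl; intros H; [lra|].
  pose proof (H a (or_introl eq_refl)). assert (lsum L f <= lsum L g) by auto. lra.
Qed.

Lemma lsum_nonneg {A} (L : list A) f : (forall a, In a L -> 0 <= f a) -> 0 <= lsum L f.
Proof. intros H. rewrite <- (lsum_0 L (fun _ => 0)) by auto. apply lsum_le; auto. Qed.

(* Cauchy-Schwarz against the constant vector 1. *)
Lemma lsum_Rabs_sqr_le {A} (L : list A) (a : A -> R) :
  lsum L (fun i => Rabs (a i)) * lsum L (fun i => Rabs (a i))
  <= INR (length L) * lsum L (fun i => a i * a i).
Proof.
  induction L as [|x L IH]; [simpl; lra|].
  replace (INR (length (x :: L))) with (INR (length L) + 1)
    by (simpl length; rewrite S_INR; ring).
  simpl lsum.
  set (S := lsum L (fun i => Rabs (a i))) in *.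
  set (Q := lsum L (fun i => a i * a i)) in *.
  set (n := INR (length L)) in *.
  assert (0 <= S) by (apply lsum_nonneg; intros; apply Rabs_pos).
  assert (0 <= n) by apply pos_INR.
  assert (Hu : Rabs (a x) * Rabs (a x) = a x * a x)
    by (rewrite <- Rabs_mult; apply Rabs_right; nra).
  pose proof (Rabs_pos (a x)). set (u := Rabs (a x)) in *. rewrite <- Hu.
  assert (2 * u * S <= n * (u * u) + Q).
  { destruct (Req_dec n 0) as [Hn|Hn].
    - assert (S * S <= 0) by (rewrite Hn in IH; lra).
      assert (0 <= Q) by (apply lsum_nonneg; intros; nra).
      assert (HS : S = 0) by nra. rewrite HS, Hn. lra.
    - (* n (n u^2 + Q - 2 u S) = (n u - S)^2 + (n Q - S^2) >= 0 *)
      pose proof (Rle_0_sqr (n * u - S)). unfold Rsqr in *.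
      assert (0 <= n * (n * (u * u) + Q - 2 * u * S)) by nra.
      apply Rmult_le_reg_l with n; nra. }
  nra.
Qed.

Fixpoint fin_enum (d : nat) : list (Fin.t d) :=
  match d with 0%nat => nil | S d => Fin.F1 :: map Fin.FS (fin_enum d) end.

Lemma fin_enum_In d (k : Fin.t d) : In k (fin_enum d).
Proof. induction k; simpl; [left; auto|right; apply in_map; auto]. Qed.

Lemma fin_enum_NoDup d : NoDup (fin_enum d).
Proof.
  induction d; simpl; constructor.
  - intro H. apply in_map_iff in H. destruct H as [x [H _]]. inversion H.
  - apply Injective_map_NoDup; auto. intros x y H. apply Fin.FS_inj; auto.
Qed.

Lemma lsum_indicator d (c : Fin.t d -> R) a :
  lsum (fin_enum d) (fun i => c i * (if Fin.eq_dec i a then 1 else 0)) = c a.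
Proof.
  set (e := fun i => c i * (if Fin.eq_dec i a then 1 else 0)).
  assert (H : forall L, NoDup L ->
            (In a L -> lsum L e = c a) /\ (~ In a L -> lsum L e = 0)).
  { induction L as [|b L IH]; intros Hnd; simpl; [tauto|].
    inversion_clear Hnd as [|? ? HbL HL]. destruct (IH HL) as [IH1 IH2].
    change (e b) with (c b * (if Fin.eq_dec b a then 1 else 0)).
    destruct (Fin.eq_dec b a) as [->|Hba].
    - rewrite IH2 by auto. split; intros Ha; [ring|exfalso; tauto].
    - split; intros Ha.
      + rewrite IH1 by (destruct Ha; congruence). ring.
      + rewrite IH2 by tauto. ring. }
  apply (H _ (fin_enum_NoDup d)), fin_enum_In.
Qed.

Lemma derivable_pt_lim_value f x l l' :
  l = l' -> derivable_pt_lim f x l -> derivable_pt_lim f x l'.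
Proof. intros ->; auto. Qed.

Lemma derivable_pt_lim_affine c b x : derivable_pt_lim (fun u => c * u + b) x c.
Proof.
  intros eps He. exists (mkposreal 1 Rlt_0_1). intros h Hh _.
  replace ((c * (x + h) + b - (c * x + b)) / h - c) with 0 by (field; auto).
  rewrite Rabs_R0; auto.
Qed.

Lemma derivable_pt_lim_lsum {A} (L : list A) (F : A -> R -> R) (F' : A -> R) t :
  (forall a, In a L -> derivable_pt_lim (F a) t (F' a)) ->
  derivable_pt_lim (fun s => lsum L (fun a => F a s)) t (lsum L F').
Proof.
  induction L as [|a L IH]; intros H; simpl.
  - apply derivable_pt_lim_const.
  - apply (derivable_pt_lim_plus (F a) (fun s => lsum L (fun a => F a s)));
      auto with datatypes.
Qed.

Lemma derivable_pt_lim_shift F s l :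
  derivable_pt_lim (fun u => F (s + u)) 0 l -> derivable_pt_lim F s l.
Proof.
  intros H eps He. destruct (H eps He) as [del Hd]. exists del. intros h Hh Hl.
  specialize (Hd h Hh Hl). rewrite Rplus_0_l, Rplus_0_r in Hd. exact Hd.
Qed.

Lemma MVT_Rabs_bound (phi phi' : R -> R) (del M : R) :
  (forall s, derivable_pt_lim phi s (phi' s)) ->
  (forall s, Rabs s <= Rabs del -> Rabs (phi' s) <= M) ->
  Rabs (phi del - phi 0) <= M * Rabs del.
Proof.
  intros D B. destruct (Rtotal_order del 0) as [Hl|[->|Hg]].
  - destruct (MVT_cor2 phi phi' del 0 Hl (fun c _ => D c)) as [c [Hc Hr]].
    assert (Rabs (phi' c) <= M) by (apply B; rewrite !Rabs_left1; lra).
    replace (phi del - phi 0) with (phi' c * del) by lra.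
    rewrite Rabs_mult. apply Rmult_le_compat_r; auto using Rabs_pos.
  - rewrite Rminus_diag, Rabs_R0, Rmult_0_r. lra.
  - destruct (MVT_cor2 phi phi' 0 del Hg (fun c _ => D c)) as [c [Hc Hr]].
    assert (Rabs (phi' c) <= M) by (apply B; rewrite !Rabs_right; lra).
    rewrite Hc, Rminus_0_r, Rabs_mult. apply Rmult_le_compat_r; auto using Rabs_pos.
Qed.

Lemma derivable_pt_lim_squeeze_0 rho psi t :
  rho t = 0 -> psi t = 0 -> derivable_pt_lim psi t 0 ->
  (forall s, Rabs (rho s) <= psi s) -> derivable_pt_lim rho t 0.
Proof.
  intros H0 H1 D B eps He. destruct (D eps He) as [del Hd]. exists del. intros h Hh Hl.
  specialize (Hd h Hh Hl). rewrite H0. rewrite H1 in Hd.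
  rewrite !Rminus_0_r in *. unfold Rdiv in *. rewrite Rabs_mult, Rabs_inv in *.
  pose proof (B (t + h)). pose proof (Rabs_pos (rho (t + h))).
  rewrite (Rabs_right (psi (t + h))) in Hd by lra.
  assert (0 < / Rabs h) by (apply Rinv_0_lt_compat, Rabs_pos_lt; auto).
  nra.
Qed.

(* Agreement on one side suffices, so t may be an end point. *)
Lemma derivable_pt_lim_unique_interval f g t h l1 l2 :
  0 < h -> 0 <= t <= h -> (forall s, 0 <= s <= h -> f s = g s) ->
  derivable_pt_lim f t l1 -> derivable_pt_lim g t l2 -> l1 = l2.
Proof.
  intros Hh Ht Heq D1 D2. destruct (Req_dec l1 l2) as [|Hne]; auto. exfalso.
  set (eps := Rabs (l1 - l2) / 2).
  assert (Hep : 0 < eps).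
  { unfold eps. assert (l1 - l2 <> 0) by lra. pose proof (Rabs_pos_lt _ H). lra. }
  destruct (D1 eps Hep) as [d1 H1], (D2 eps Hep) as [d2 H2].
  pose proof (cond_pos d1). pose proof (cond_pos d2).
  set (e := Rmin (Rmin d1 d2) h / 2).
  pose proof (Rmin_l (Rmin d1 d2) h). pose proof (Rmin_r (Rmin d1 d2) h).
  pose proof (Rmin_l d1 d2). pose proof (Rmin_r d1 d2).
  assert (0 < Rmin (Rmin d1 d2) h) by (apply Rmin_pos; [apply Rmin_pos|]; lra).
  assert (exists s, s <> 0 /\ Rabs s = e /\ 0 <= t + s <= h) as [s [Hs0 [Hs1 Hs2]]].
  { destruct (Rle_dec (t + e) h).
    - exists e. rewrite Rabs_right by (unfold e; lra). unfold e in *; repeat split; lra.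
    - exists (-e). rewrite Rabs_Ropp, Rabs_right by (unfold e; lra).
      unfold e in *; repeat split; lra. }
  specialize (H1 s Hs0 ltac:(unfold e in *; lra)). specialize (H2 s Hs0 ltac:(unfold e in *; lra)).
  rewrite (Heq (t + s) Hs2), (Heq t Ht) in H1.
  apply Rabs_def2 in H1. apply Rabs_def2 in H2.
  unfold eps in *. destruct (Rcase_abs (l1 - l2)).
  - rewrite Rabs_left in * by lra. lra.
  - rewrite Rabs_right in * by lra. lra.
Qed.

Lemma bound_In_list {A} (L : list A) (P : A -> R -> Prop) :
  (forall a C C', P a C -> C <= C' -> P a C') -> (forall a, exists C, P a C) ->
  exists C, forall a, In a L -> P a C.
Proof.
  intros Hm He. induction L as [|a L [C2 H2]]; [exists 0; intros _ []|].
  destruct (He a) as [C1 H1]. exists (Rmax C1 C2). intros b [<-|Hb].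
  - eapply Hm; eauto. apply Rmax_l.
  - eapply Hm; eauto. apply Rmax_r.
Qed.

(** * Chain rule through bounded second partial derivatives *)

Definition l1_dist {d} (x y : Vec d) : R := lsum (fin_enum d) (fun i => Rabs (y i - x i)).

Lemma shift_shift d (z : Vec d) a s u : shift (shift z a s) a u = shift z a (s + u).
Proof.
  apply functional_extensionality; intro k. unfold shift. destruct (Fin.eq_dec k a); ring.
Qed.

Lemma shift_0 d (z : Vec d) a : shift z a 0 = z.
Proof.
  apply functional_extensionality; intro k. unfold shift. destruct (Fin.eq_dec k a); ring.
Qed.

Fixpoint replace_coords {d} (L : list (Fin.t d)) (x y : Vec d) : Vec d :=
  match L with nil => x | a :: L => shift (replace_coords L x y) a (y a - x a) end.

Lemma replace_coords_spec d (L : list (Fin.t d)) x y k : NoDup L ->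
  (In k L -> replace_coords L x y k = y k) /\ (~ In k L -> replace_coords L x y k = x k).
Proof.
  induction L as [|a L IH]; intros Hnd; simpl; [tauto|].
  inversion_clear Hnd as [|? ? HaL HL]. destruct (IH HL) as [IH1 IH2]. unfold shift.
  destruct (Fin.eq_dec k a) as [->|Hka].
  - rewrite IH2 by auto. split; intros; [ring|tauto].
  - split; intros Hk.
    + rewrite IH1 by (destruct Hk; congruence). ring.
    + rewrite IH2 by tauto. ring.
Qed.

(* Move from x to y one coordinate at a time, using the mean value theorem
   on each segment; every intermediate point lies in the box spanned by x and y. *)
Lemma Rabs_sub_le_partials d (G : Vec d -> R) (dG : Fin.t d -> Vec d -> R) (x y : Vec d) M :
  (forall a w, derivable_pt_lim (fun u => G (shift w a u)) 0 (dG a w)) ->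
  (forall z, (forall i, Rabs (z i - x i) <= Rabs (y i - x i)) -> forall a, Rabs (dG a z) <= M) ->
  Rabs (G y - G x) <= M * l1_dist x y.
Proof.
  intros HD HB.
  assert (H : forall L, NoDup L ->
    Rabs (G (replace_coords L x y) - G x) <= M * lsum L (fun i => Rabs (y i - x i))).
  { induction L as [|a L IH]; intros Hnd; simpl.
    - rewrite Rminus_diag, Rabs_R0. lra.
    - inversion_clear Hnd as [|? ? HaL HL]. specialize (IH HL).
      set (z := replace_coords L x y) in *.
      assert (Hm : Rabs (G (shift z a (y a - x a)) - G (shift z a 0)) <= M * Rabs (y a - x a)).
      { apply (MVT_Rabs_bound (fun u => G (shift z a u)) (fun u => dG a (shift z a u))).
        - intro s. apply derivable_pt_lim_shift.
          apply (derivable_pt_lim_ext (fun u => G (shift (shift z a s) a u))).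
          + intro u. rewrite shift_shift; auto.
          + apply HD.
        - intros s Hs. apply HB. intro i. unfold shift.
          destruct (Fin.eq_dec i a) as [->|Hia].
          + unfold z. rewrite (proj2 (replace_coords_spec d L x y a HL) HaL).
            replace (x a + s - x a) with s by ring. auto.
          + rewrite Rplus_0_r. unfold z.
            destruct (in_dec Fin.eq_dec i L) as [Hi|Hi].
            * rewrite (proj1 (replace_coords_spec d L x y i HL) Hi). lra.
            * rewrite (proj2 (replace_coords_spec d L x y i HL) Hi), Rminus_diag, Rabs_R0.
              apply Rabs_pos. }
      rewrite shift_0 in Hm.
      replace (G (shift z a (y a - x a)) - G x)
        with ((G (shift z a (y a - x a)) - G z) + (G z - G x)) by ring.
      eapply Rle_trans; [apply Rabs_triang|]. lra. }
  replace y with (replace_coords (fin_enum d) x y) at 1.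
  - apply H, fin_enum_NoDup.
  - apply functional_extensionality; intro k.
    apply (replace_coords_spec d (fin_enum d) x y k (fin_enum_NoDup d)), fin_enum_In.
Qed.

Section ChainRule.

Variables (d : nat) (G : Vec d -> R) (dG : Fin.t d -> Vec d -> R)
  (ddG : Fin.t d -> Fin.t d -> Vec d -> R) (M2 : R).
Hypothesis G_partial : forall a w, derivable_pt_lim (fun u => G (shift w a u)) 0 (dG a w).
Hypothesis dG_partial :
  forall i a w, derivable_pt_lim (fun u => dG i (shift w a u)) 0 (ddG a i w).
Hypothesis ddG_bound : forall a i w, Rabs (ddG a i w) <= M2.
Hypothesis M2_nonneg : 0 <= M2.

Lemma first_order_remainder_bound x y :
  Rabs (G y - G x - lsum (fin_enum d) (fun i => dG i x * (y i - x i)))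
  <= M2 * l1_dist x y * l1_dist x y.
Proof.
  assert (HdG : forall a z, Rabs (dG a z - dG a x) <= M2 * l1_dist x z).
  { intros a z. apply (Rabs_sub_le_partials d (dG a) (fun j => ddG j a)); auto. }
  set (R1 := fun w => G w - lsum (fin_enum d) (fun i => dG i x * (w i - x i))).
  replace (G y - G x - _) with (R1 y - R1 x).
  2:{ unfold R1. rewrite (lsum_0 _ (fun i => dG i x * (x i - x i))) by (intros; ring). ring. }
  apply (Rabs_sub_le_partials d R1
    (fun a w => dG a w - lsum (fin_enum d) (fun i => dG i x * (if Fin.eq_dec i a then 1 else 0)))).
  - intros a w. unfold R1.
    apply (derivable_pt_lim_minus (fun u => G (shift w a u))
             (fun u => lsum (fin_enum d) (fun i => dG i x * (shift w a u i - x i)))).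
    { apply G_partial. }
    apply (derivable_pt_lim_lsum (fin_enum d) (fun i u => dG i x * (shift w a u i - x i))).
    intros i _. unfold shift.
    apply (derivable_pt_lim_ext (fun u => (dG i x * (if Fin.eq_dec i a then 1 else 0)) * u
             + dG i x * (w i + 0 - x i))).
    + intro u. destruct (Fin.eq_dec i a); ring.
    + apply derivable_pt_lim_affine.
  - intros z Hz a. rewrite lsum_indicator.
    eapply Rle_trans; [apply HdG|]. apply Rmult_le_compat_l; auto.
    apply lsum_le. auto.
Qed.

Lemma derivable_pt_lim_comp_partials (c : R -> Vec d) (v : Vec d) t :
  (forall i, derivable_pt_lim (fun s => c s i) t (v i)) ->
  derivable_pt_lim (fun s => G (c s)) t (lsum (fin_enum d) (fun i => dG i (c t) * v i)).
Proof.
  intros Hc. set (x := c t). set (N := INR (length (fin_enum d))).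
  set (lin := fun s => lsum (fin_enum d) (fun i => dG i x * (c s i - x i))).
  set (rho := fun s => G (c s) - G x - lin s).
  set (psi := fun s => M2 * N * lsum (fin_enum d) (fun i => (c s i - x i) * (c s i - x i))).
  assert (Hci : forall i, derivable_pt_lim (fun s => c s i - x i) t (v i)).
  { intro i. apply (derivable_pt_lim_value _ _ (v i - 0)); [ring|].
    apply (derivable_pt_lim_minus (fun s => c s i) (fun _ => x i)); auto.
    apply derivable_pt_lim_const. }
  assert (Hlin : derivable_pt_lim lin t (lsum (fin_enum d) (fun i => dG i x * v i))).
  { apply (derivable_pt_lim_lsum (fin_enum d) (fun i s => dG i x * (c s i - x i))).
    intros i _. apply (derivable_pt_lim_scal (fun s => c s i - x i)); auto. }
  (* rho is the first-order remainder, squeezed by a quadratic *)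
  assert (Hrho : derivable_pt_lim rho t 0).
  { apply (derivable_pt_lim_squeeze_0 rho psi).
    - unfold rho, lin. rewrite (lsum_0 _ (fun i => dG i x * (c t i - x i)))
        by (intros; unfold x; ring). unfold x; ring.
    - unfold psi. rewrite (lsum_0 _ (fun i => (c t i - x i) * (c t i - x i)))
        by (intros; unfold x; ring). ring.
    - unfold psi.
      apply (derivable_pt_lim_value _ _
        (M2 * N * lsum (fin_enum d) (fun i => v i * (c t i - x i) + (c t i - x i) * v i))).
      { rewrite (lsum_0 (fin_enum d)) by (intros; unfold x; ring). ring. }
      apply (derivable_pt_lim_scal
               (fun s => lsum (fin_enum d) (fun i => (c s i - x i) * (c s i - x i)))).
      apply (derivable_pt_lim_lsum (fin_enum d) (fun i s => (c s i - x i) * (c s i - x i))).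
      intros i _. apply (derivable_pt_lim_mult (fun s => c s i - x i) (fun s => c s i - x i));
        apply Hci.
    - intro s. unfold rho, lin, psi. eapply Rle_trans; [apply first_order_remainder_bound|].
      rewrite !Rmult_assoc. apply Rmult_le_compat_l; auto.
      apply lsum_Rabs_sqr_le. }
  apply (derivable_pt_lim_ext (fun s => rho s + (G x + lin s))).
  { intro s. unfold rho. ring. }
  apply (derivable_pt_lim_value _ _ (0 + (0 + lsum (fin_enum d) (fun i => dG i x * v i))));
    [ring|].
  apply (derivable_pt_lim_plus rho (fun s => G x + lin s)); auto.
  apply (derivable_pt_lim_plus (fun _ => G x) lin); auto. apply derivable_pt_lim_const.
Qed.

End ChainRule.

(** * Differential polynomials *)

(* [(l, k, fs)] stands for [(D_l f_k)(x) * prod_{(m, i) in fs} x^(m)_i], where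
   [D_l] is an iterated partial derivative of [f] and [x^(m)] is the m-th time
   derivative of a curve [x]. *)
Definition dmono (d : nat) : Type := (list (Fin.t d) * Fin.t d * list (nat * Fin.t d))%type.

Definition factors_eval {d} (a : nat -> Fin.t d -> R) (fs : list (nat * Fin.t d)) : R :=
  fold_right (fun f acc => a (fst f) (snd f) * acc) 1 fs.

Definition dmono_eval {d} (Df : list (Fin.t d) -> Vec d -> Vec d) (x : Vec d)
    (a : nat -> Fin.t d -> R) (mo : dmono d) : R :=
  let '(l, k, fs) := mo in Df l x k * factors_eval a fs.

Definition dpoly_eval {d} Df (x : Vec d) a (P : list (dmono d)) : R :=
  lsum P (dmono_eval Df x a).

Fixpoint factors_deriv {d} (fs : list (nat * Fin.t d)) : list (list (nat * Fin.t d)) :=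
  match fs with
  | nil => nil
  | (m, i) :: r => ((S m, i) :: r) :: map (cons (m, i)) (factors_deriv r)
  end.

Definition dmono_deriv {d} (mo : dmono d) : list (dmono d) :=
  let '(l, k, fs) := mo in
  map (fun a => (a :: l, k, (1%nat, a) :: fs)) (fin_enum d)
  ++ map (fun fs' => (l, k, fs')) (factors_deriv fs).

Definition dpoly_deriv {d} (P : list (dmono d)) : list (dmono d) := flat_map dmono_deriv P.

(* The (k+2)-th derivative of a solution of x'' = f(x), component i. *)
Fixpoint ode_deriv_poly {d} (k : nat) (i : Fin.t d) : list (dmono d) :=
  match k with
  | 0%nat => (nil, i, nil) :: nil
  | S k => dpoly_deriv (ode_deriv_poly k i)
  end.

Definition tower {d} (D : nat -> R -> Vec d) : Prop :=
  forall k t i, derivable_pt_lim (fun s => D k s i) t (D (S k) t i).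

Definition dpoly_along {d} Df (D : nat -> R -> Vec d) t P :=
  dpoly_eval Df (D 0%nat t) (fun m i => D m t i) P.

Section DerivativeAlongCurves.

Variables (d : nat) (Df : list (Fin.t d) -> Vec d -> Vec d).
Hypothesis Df_partial :
  forall l i x k, derivable_pt_lim (fun s => Df l (shift x i s) k) 0 (Df (i :: l) x k).
Hypothesis Df_bounded : forall l, exists C, forall x k, Rabs (Df l x k) <= C.

Lemma Df_second_partials_bound l :
  exists M2, 0 <= M2 /\ forall a j z k, Rabs (Df (j :: a :: l) z k) <= M2.
Proof.
  destruct (bound_In_list (fin_enum d)
              (fun a C => forall j z k, Rabs (Df (j :: a :: l) z k) <= C)) as [M HM].
  - intros a C C' H Hle j z k. specialize (H j z k). lra.
  - intro a. destruct (bound_In_list (fin_enum d)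
                         (fun j C => forall z k, Rabs (Df (j :: a :: l) z k) <= C)) as [M HM].
    + intros j C C' H Hle z k. specialize (H z k). lra.
    + intro j. apply Df_bounded.
    + exists M. intros j. apply HM, fin_enum_In.
  - exists (Rmax M 0). split; [apply Rmax_r|]. intros a j z k.
    eapply Rle_trans; [apply (HM a (fin_enum_In d a))|apply Rmax_l].
Qed.

Variable D : nat -> R -> Vec d.
Hypothesis D_tower : tower D.

Lemma factors_eval_deriv fs t :
  derivable_pt_lim (fun s => factors_eval (fun m i => D m s i) fs) t
    (lsum (factors_deriv fs) (factors_eval (fun m i => D m t i))).
Proof.
  induction fs as [|[m i] r IH]; simpl.
  - apply derivable_pt_lim_const.
  - apply (derivable_pt_lim_value _ _ (D (S m) t i * factors_eval (fun m i => D m t i) r +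
         D m t i * lsum (factors_deriv r) (factors_eval (fun m i => D m t i)))).
    { rewrite lsum_map, <- lsum_mult_l. reflexivity. }
    apply (derivable_pt_lim_mult (fun s => D m s i)); auto.
Qed.

Lemma dmono_along_deriv (mo : dmono d) t :
  derivable_pt_lim (fun s => dmono_eval Df (D 0%nat s) (fun m i => D m s i) mo) t
    (dpoly_along Df D t (dmono_deriv mo)).
Proof.
  destruct mo as [[l k] fs]. unfold dpoly_along, dpoly_eval, dmono_deriv; simpl.
  rewrite lsum_app, !lsum_map. simpl.
  destruct (Df_second_partials_bound l) as [M2 [HM2 HM]].
  apply (derivable_pt_lim_value _ _
    (lsum (fin_enum d) (fun i => Df (i :: l) (D 0%nat t) k * D 1%nat t i)
       * factors_eval (fun m i => D m t i) fs
     + Df l (D 0%nat t) k * lsum (factors_deriv fs) (factors_eval (fun m i => D m t i)))).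
  { f_equal.
    - rewrite Rmult_comm, <- lsum_mult_l. apply lsum_ext. intros; ring.
    - rewrite <- lsum_mult_l. apply lsum_ext. intros; ring. }
  apply (derivable_pt_lim_mult (fun s => Df l (D 0%nat s) k)).
  - apply (derivable_pt_lim_comp_partials d (fun x => Df l x k) (fun i x => Df (i :: l) x k)
             (fun a i x => Df (a :: i :: l) x k) M2); auto.
  - apply factors_eval_deriv.
Qed.

Lemma dpoly_along_deriv P t :
  derivable_pt_lim (fun s => dpoly_along Df D s P) t (dpoly_along Df D t (dpoly_deriv P)).
Proof.
  unfold dpoly_along, dpoly_eval, dpoly_deriv. rewrite lsum_flat_map.
  apply (derivable_pt_lim_lsum P (fun mo s => dmono_eval Df (D 0%nat s) (fun m i => D m s i) mo)).
  intros mo _. apply dmono_along_deriv.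
Qed.

Lemma tower_comp_eval (F : nat -> R -> Vec d) h :
  0 < h -> tower F -> (forall t i, 0 <= t <= h -> F 0%nat t i = Df nil (D 0%nat t) i) ->
  forall k t i, 0 <= t <= h -> F k t i = dpoly_along Df D t (ode_deriv_poly k i).
Proof.
  intros Hh HF HF0. induction k as [|k IH]; intros t i Ht.
  - rewrite HF0 by auto. unfold dpoly_along, dpoly_eval; simpl. ring.
  - apply (derivable_pt_lim_unique_interval (fun s => F k s i)
             (fun s => dpoly_along Df D s (ode_deriv_poly k i)) t h); auto.
    apply dpoly_along_deriv.
Qed.

End DerivativeAlongCurves.

(** * Perturbation estimates *)

Definition close (B E u v : R) : Prop := Rabs u <= B /\ Rabs v <= B /\ Rabs (u - v) <= E.

Definition close_upto {d} (M : nat) (B E : R) (a b : nat -> Fin.t d -> R) : Prop :=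
  forall m i, (1 <= m <= M)%nat -> close B E (a m i) (b m i).

Lemma close_weaken B E B' E' u v : B <= B' -> E <= E' -> close B E u v -> close B' E' u v.
Proof. unfold close. lra. Qed.

Lemma close_plus B1 E1 B2 E2 u1 v1 u2 v2 :
  close B1 E1 u1 v1 -> close B2 E2 u2 v2 -> close (B1 + B2) (E1 + E2) (u1 + u2) (v1 + v2).
Proof.
  unfold close. intros (H1 & H2 & H3) (G1 & G2 & G3).
  pose proof (Rabs_triang u1 u2). pose proof (Rabs_triang v1 v2).
  pose proof (Rabs_triang (u1 - v1) (u2 - v2)).
  replace (u1 + u2 - (v1 + v2)) with (u1 - v1 + (u2 - v2)) by ring.
  repeat split; lra.
Qed.

Lemma close_mult B1 E1 B2 E2 u1 v1 u2 v2 :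
  close B1 E1 u1 v1 -> close B2 E2 u2 v2 -> close (B1 * B2) (B1 * E2 + B2 * E1) (u1 * u2) (v1 * v2).
Proof.
  unfold close. intros (H1 & H2 & H3) (G1 & G2 & G3).
  pose proof (Rabs_pos u1). pose proof (Rabs_pos v2).
  pose proof (Rabs_pos (u2 - v2)). pose proof (Rabs_pos (u1 - v1)).
  replace (u1 * u2 - v1 * v2) with (u1 * (u2 - v2) + v2 * (u1 - v1)) by ring.
  repeat split; rewrite ?Rabs_mult.
  - apply Rmult_le_compat; auto using Rabs_pos.
  - apply Rmult_le_compat; auto using Rabs_pos.
  - eapply Rle_trans; [apply Rabs_triang|]. rewrite !Rabs_mult.
    apply Rplus_le_compat; apply Rmult_le_compat; auto.
Qed.

Lemma close_upto_le {d} M M' B E (a b : nat -> Fin.t d -> R) :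
  (M' <= M)%nat -> close_upto M B E a b -> close_upto M' B E a b.
Proof. intros HM H m i Hm. apply H. lia. Qed.

Definition orders_le {d} (M : nat) (P : list (dmono d)) : Prop :=
  forall mo, In mo P -> forall f, In f (snd mo) -> (1 <= fst f <= M)%nat.

Lemma factors_deriv_orders d M (fs : list (nat * Fin.t d)) :
  (forall f, In f fs -> (1 <= fst f <= M)%nat) ->
  forall fs', In fs' (factors_deriv fs) -> forall f, In f fs' -> (1 <= fst f <= S M)%nat.
Proof.
  induction fs as [|[m i] r IH]; simpl; intros H fs' Hfs' f Hf; [destruct Hfs'|].
  pose proof (H (m, i) (or_introl eq_refl)) as Hmi. simpl in Hmi.
  destruct Hfs' as [<-|Hfs'].
  - destruct Hf as [<-|Hf]; simpl; [lia|]. specialize (H f (or_intror Hf)). lia.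
  - apply in_map_iff in Hfs'. destruct Hfs' as [fs'' [<- Hfs'']].
    destruct Hf as [<-|Hf]; simpl; [lia|].
    apply (IH (fun f Hf => H f (or_intror Hf)) fs'' Hfs'' f Hf).
Qed.

Lemma dpoly_deriv_orders d M (P : list (dmono d)) :
  orders_le M P -> orders_le (S M) (dpoly_deriv P).
Proof.
  unfold orders_le, dpoly_deriv. intros H mo Hmo f Hf.
  apply in_flat_map in Hmo. destruct Hmo as [[[l k] fs] [Hin Hmo]].
  specialize (H _ Hin). simpl in H. unfold dmono_deriv in Hmo.
  apply in_app_or in Hmo.
  destruct Hmo as [Hmo|Hmo]; apply in_map_iff in Hmo; destruct Hmo as [z [<- Hz]];
    simpl in Hf.
  - destruct Hf as [<-|Hf]; simpl; [lia|]. specialize (H f Hf). lia.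
  - apply (factors_deriv_orders d M fs H z); auto.
Qed.

Lemma ode_deriv_poly_orders d k (i : Fin.t d) : orders_le k (ode_deriv_poly k i).
Proof.
  induction k; simpl.
  - intros mo [<-|[]] f [].
  - apply dpoly_deriv_orders; auto.
Qed.

Section Perturbation.

Variables (d : nat) (Df : list (Fin.t d) -> Vec d -> Vec d).
Hypothesis Df_bounded : forall l, exists C, forall x k, Rabs (Df l x k) <= C.

Lemma factors_eval_close M B (fs : list (nat * Fin.t d)) :
  (forall f, In f fs -> (1 <= fst f <= M)%nat) ->
  exists X, 0 <= X /\ forall (a b : nat -> Fin.t d -> R) E, 0 <= E ->
    close_upto M B E a b -> close X (X * E) (factors_eval a fs) (factors_eval b fs).
Proof.
  induction fs as [|[m i] r IH]; intros Hfs.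
  - exists 1. split; [lra|]. intros a b E HE _. unfold close; simpl.
    rewrite Rminus_diag, Rabs_R0, Rabs_R1. repeat split; lra.
  - destruct IH as [X [HX0 HX]]; [intros f Hf; apply Hfs; right; auto|].
    pose proof (Rle_abs B).
    exists (Rabs B * X + X). split; [pose proof (Rabs_pos B); nra|].
    intros a b E HE Hab. simpl.
    assert (0 <= (Rabs B - B) * X) by nra.
    apply (close_weaken (B * X) (B * (X * E) + X * E)); [nra|nra|].
    apply close_mult; auto. apply (Hab m i (Hfs _ (or_introl eq_refl))).
Qed.

Lemma dpoly_eval_close M B (P : list (dmono d)) :
  orders_le M P ->
  exists X, 0 <= X /\ forall x (a b : nat -> Fin.t d -> R) E, 0 <= E ->
    close_upto M B E a b -> close X (X * E) (dpoly_eval Df x a P) (dpoly_eval Df x b P).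
Proof.
  induction P as [|[[l k] fs] P IH]; intros HP.
  - exists 0. split; [lra|]. intros x a b E HE _. unfold close, dpoly_eval; simpl.
    rewrite Rminus_diag, Rabs_R0. repeat split; lra.
  - destruct IH as [X [HX0 HX]]; [intros mo Hmo; apply HP; right; auto|].
    destruct (factors_eval_close M B fs) as [Xf [HXf0 HXf]].
    { apply (HP (l, k, fs)). left; auto. }
    destruct (Df_bounded l) as [K HK].
    exists (Rabs K * Xf + X). split; [pose proof (Rabs_pos K); nra|].
    intros x a b E HE Hab. unfold dpoly_eval; simpl.
    apply (close_weaken (Rabs K * Xf + X) ((Rabs K * (Xf * E) + Xf * 0) + X * E));
      [lra|right; ring|].
    apply close_plus; [|apply HX; auto].
    apply close_mult; auto.
    unfold close. rewrite Rminus_diag, Rabs_R0. specialize (HK x k).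
    pose proof (Rle_abs K). repeat split; lra.
Qed.

Lemma ode_deriv_poly_close k B :
  exists X, 0 <= X /\ forall i x (a b : nat -> Fin.t d -> R) E, 0 <= E ->
    close_upto k B E a b ->
    close X (X * E) (dpoly_eval Df x a (ode_deriv_poly k i)) (dpoly_eval Df x b (ode_deriv_poly k i)).
Proof.
  destruct (bound_In_list (fin_enum d) (fun i X => 0 <= X /\ forall x a b E, 0 <= E ->
      close_upto k B E a b ->
      close X (X * E) (dpoly_eval Df x a (ode_deriv_poly k i))
        (dpoly_eval Df x b (ode_deriv_poly k i)))) as [X HX].
  - intros i X X' [HX0 HX] Hle. split; [lra|]. intros x a b E HE Hab.
    apply (close_weaken X (X * E)); [lra|nra|auto].
  - intro i. apply dpoly_eval_close, ode_deriv_poly_orders.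
  - exists (Rmax X 0). split; [apply Rmax_r|]. intros i x a b E HE Hab.
    destruct (HX i (fin_enum_In d i)) as [_ HXi].
    apply (close_weaken X (X * E)); [apply Rmax_l|apply Rmult_le_compat_r, Rmax_l; auto|auto].
Qed.

(* The uniform constants come from inducting on the derivative order, each new
   derivative being a differential polynomial in the lower ones. *)
Lemma ode_derivs_close M B :
  exists Bm Cm, 0 <= Cm /\ forall x (a b : nat -> Fin.t d -> R) E, 0 <= E ->
    (forall k i, (S (S k) <= M)%nat ->
       a (S (S k)) i = dpoly_eval Df x a (ode_deriv_poly k i) /\
       b (S (S k)) i = dpoly_eval Df x b (ode_deriv_poly k i)) ->
    close_upto 1 B E a b -> close_upto M Bm (Cm * E) a b.
Proof.
  induction M as [|[|k] IH].
  - exists 0, 0. split; [lra|]. intros x a b E _ _ _ m i Hm. lia.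
  - exists B, 1. split; [lra|]. intros x a b E _ _ H1. rewrite Rmult_1_l. exact H1.
  - destruct IH as [Bm [Cm [HCm IH]]].
    destruct (ode_deriv_poly_close k Bm) as [X [HX0 HX]].
    exists (Rmax Bm X), (Rmax Cm (X * Cm)). split; [apply (Rle_trans _ Cm); auto; apply Rmax_l|].
    intros x a b E HE Hrec H1.
    assert (Hlow : close_upto (S k) Bm (Cm * E) a b).
    { apply (IH x); auto. }
    pose proof (Rmax_l Cm (X * Cm)). pose proof (Rmax_r Cm (X * Cm)).
    intros m i Hm. destruct (Nat.eq_dec m (S (S k))) as [->|Hne].
    + destruct (Hrec k i (Nat.le_refl _)) as [-> ->].
      apply (close_weaken X (X * (Cm * E))); [apply Rmax_r|nra|].
      apply HX; [nra|]. apply (close_upto_le (S k)); auto.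
    + apply (close_weaken Bm (Cm * E)); [apply Rmax_l|nra|]. apply Hlow. lia.
Qed.

End Perturbation.

(** * Derivatives of the solution and of the collocation polynomial *)

Section Solutions.

Variables (d : nat) (f : Vec d -> Vec d) (Df : list (Fin.t d) -> Vec d -> Vec d).
Hypothesis Df_nil : forall x k, Df nil x k = f x k.
Hypothesis Df_partial :
  forall l i x k, derivable_pt_lim (fun s => Df l (shift x i s) k) 0 (Df (i :: l) x k).
Hypothesis Df_bounded : forall l, exists C, forall x k, Rabs (Df l x k) <= C.

Lemma ode_solution_derivs (q : R -> Vec d) (Dq : nat -> R -> Vec d) h :
  0 < h -> deriv_tower q Dq -> (forall t i, 0 <= t <= h -> Dq 2%nat t i = f (q t) i) ->
  forall k t i, 0 <= t <= h -> Dq (S (S k)) t i = dpoly_along Df Dq t (ode_deriv_poly k i).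
Proof.
  intros Hh [Dq0 Dq_tower] Hode.
  apply (tower_comp_eval d Df Df_partial Df_bounded Dq Dq_tower (fun k => Dq (S (S k))) h Hh).
  - intros m t i. apply Dq_tower.
  - intros t i Ht. rewrite Hode, <- Df_nil by auto. f_equal.
    apply functional_extensionality. auto.
Qed.

Lemma collocation_derivs n h (q qd : R -> Vec d) (Dqd : nat -> R -> Vec d) :
  0 < h -> deriv_tower qd Dqd -> pc_hermite f n h q qd Dqd ->
  forall k tau i, (tau = 0 \/ tau = h) -> (S (S k) <= n)%nat ->
    Dqd (S (S k)) tau i = dpoly_along Df Dqd tau (ode_deriv_poly k i).
Proof.
  intros Hh [Dqd0 Dqd_tower] (_ & _ & _ & F & [F0 F_tower] & Hcoll) k tau i Htau Hk.
  rewrite Hcoll by (auto; lia). simpl. rewrite Nat.sub_0_r.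
  apply (tower_comp_eval d Df Df_partial Df_bounded Dqd Dqd_tower F h Hh F_tower).
  - intros t i' _. rewrite F0, <- Df_nil. f_equal.
    apply functional_extensionality. auto.
  - destruct Htau as [-> | ->]; lra.
Qed.

End Solutions.

Theorem mainTheorem1
  (d : nat) (f : Vec d -> Vec d) (n : nat) (h0 p : R)
  (q qd : R -> R -> Vec d) (Dq Dqd : R -> nat -> R -> Vec d) :
  smooth_bounded_derivs f ->
  (3 <= n)%nat ->
  0 < h0 -> 0 < p ->
  (forall h, 0 < h <= h0 ->
     deriv_tower (q h) (Dq h) /\
     (forall t i, 0 <= t <= h -> Dq h 2%nat t i = f (q h t) i) /\
     deriv_tower (qd h) (Dqd h) /\
     pc_hermite f n h (q h) (qd h) (Dqd h)) ->
  (exists B, forall h, 0 < h <= h0 ->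
     (forall t i, 0 <= t <= h -> Rabs (Dq h 1%nat t i) <= B) /\
     (forall tau i, (tau = 0 \/ tau = h) -> Rabs (Dqd h 1%nat tau i) <= B)) ->
  (exists C h1, 0 < h1 /\ forall h, 0 < h <= h0 -> h <= h1 ->
     forall tau i, (tau = 0 \/ tau = h) ->
       Rabs (Dqd h 1%nat tau i - Dq h 1%nat tau i) <= C * Rpower h p) ->
  exists C h1, 0 < h1 /\ forall h, 0 < h <= h0 -> h <= h1 ->
    forall tau j i, (tau = 0 \/ tau = h) -> (3 <= j <= n)%nat ->
      Rabs (Dqd h j tau i - Dq h j tau i) <= C * Rpower h p.
Proof.
  intros [Df [Df_nil [Df_partial Df_bounded]]] _ _ _ Hsol [B HB] [C [h1 [Hh1 HC]]].
  destruct (ode_derivs_close d Df Df_bounded n B) as [Bn [Cn [HCn Hclose]]].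
  exists (Cn * Rabs C), h1. split; [exact Hh1|].
  intros h Hh Hh1' tau j i Htau Hj.
  destruct (Hsol h Hh) as (Hq & Hode & Hqd & Hpc).
  assert (Hx : Dqd h 0%nat tau = Dq h 0%nat tau).
  { destruct Hq as [Dq0 _], Hqd as [Dqd0 _], Hpc as (_ & qd_0 & qd_h & _).
    apply functional_extensionality. intro k. rewrite Dq0, Dqd0.
    destruct Htau as [-> | ->]; auto. }
  assert (Hp : 0 < Rpower h p) by apply exp_pos.
  assert (Hcl : close_upto n Bn (Cn * (Rabs C * Rpower h p))
                  (fun m k => Dqd h m tau k) (fun m k => Dq h m tau k)).
  { apply (Hclose (Dq h 0%nat tau)); [pose proof (Rabs_pos C); nra| |].
    - intros k k' Hk. split.
      + rewrite <- Hx.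
        apply (collocation_derivs d f Df Df_nil Df_partial Df_bounded n h (q h) (qd h));
          auto; lra.
      + apply (ode_solution_derivs d f Df Df_nil Df_partial Df_bounded (q h) (Dq h) h);
          auto; [lra|].
        destruct Htau as [-> | ->]; lra.
    - intros m k' Hm. replace m with 1%nat by lia. destruct (HB h Hh) as [HBq HBqd].
      repeat split; auto.
      + apply HBq. destruct Htau as [-> | ->]; lra.
      + eapply Rle_trans; [apply HC; auto|]. apply Rmult_le_compat_r; [lra|apply Rle_abs]. }
  destruct (Hcl j i ltac:(lia)) as (_ & _ & Hji). rewrite Rmult_assoc. exact Hji.
Qed.
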